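(* Let $\Lambda$ be a normal modal logic over the modal language $\mathcal{L}$ which is (logically) compact and which is sound and complete with respect to a class $\mathcal{C}$ of pointed Kripke models. Then the modal space $\mathcal{C}_{\boldsymbol{\mathcal{L}}_{\Lambda}}$ (the quotient of $\mathcal{C}$ under $\Lambda$-equivalence, made into a set via Scott's trick), equipped with the Stone topology $\mathcal{T}_{\boldsymbol{\mathcal{L}}_{\Lambda}}$, is a Stone space, i.e. it is totally disconnected, compact and Hausdorff.
   Context: Fix a countable non-empty set $\Phi$ of atoms and a countable non-empty set $\mathcal{I}$ of operator indices. The modal language $\mathcal{L}$ is given by $\varphi ::= \top \mid p \mid \neg\varphi \mid \varphi\wedge\varphi \mid \Box_i\varphi$ ($p\in\Phi$, $i\in\mathcal{I}$). A Kripke model is $M=(\llbracket M\rrbracket,R,\llbracket\cdot\rrbracket)$ with $\llbracket M\rrbracket$ a countable non-empty set of states, $R_i\subseteq \llbracket M\rrbracket^2$ for each $i\in\mathcal{I}$, and $\llbracket\cdot\rrbracket:\Phi\to\mathcal{P}(\llbracket M\rrbracket)$; a pointed Kripke model is $Ms$ with $s\in\llbracket M\rrbracket$, and formulas are evaluated with the standard semantics. For a normal modal logic $\Lambda$ and $\varphi\in\mathcal{L}$, $\boldsymbol{\varphi}$ is the set of formulas $\Lambda$-provably equivalent to $\varphi$, and $\boldsymbol{\mathcal{L}}_{\Lambda}=\{\boldsymbol{\varphi}:\varphi\in\mathcal{L}\}$. $\Lambda$ is compact if a set $A\subseteq\mathcal{L}$ is $\Lambda$-consistent iff every finite subset of $A$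 is. For a collection $X$ of pointed Kripke models on which $\Lambda$ is sound, $X_{\boldsymbol{\mathcal{L}}_{\Lambda}}=\{\boldsymbol{x}:x\in X\}$ where $\boldsymbol{x}=\{y\in X:\ y\models\varphi \text{ iff } x\models\varphi \text{ for all }\varphi\in\mathcal{L}\}$. The Stone topology $\mathcal{T}_{\boldsymbol{\mathcal{L}}_{\Lambda}}$ on it is generated by the sets $\{\boldsymbol{x}: x\models\varphi\}$, $\varphi\in\mathcal{L}$. *)

From HB Require Import structures.
From mathcomp Require Import all_boot all_order.
From mathcomp Require Import boolp classical_sets functions cardinality.
From mathcomp Require Import topology.
From Stdlib Require List.
Export boolp classical_sets cardinality topology.

Set Implicit Arguments.
Unset Strict Implicit.
Unset Printing Implicit Defensive.

Local Open Scope classical_set_scope.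

Inductive form (Phi I : Type) : Type :=
  | Top : form Phi I
  | Atom : Phi -> form Phi I
  | Neg : form Phi I -> form Phi I
  | And : form Phi I -> form Phi I -> form Phi I
  | Box : I -> form Phi I -> form Phi I.
Arguments Top {Phi I}.

Section Syntax.
Context {Phi I : Type}.
Local Notation form := (form Phi I).

Definition Imp (a b : form) : form := Neg (And a (Neg b)).
Definition Iff (a b : form) : form := And (Imp a b) (Imp b a).
Definition bigAnd (s : seq form) : form := foldr (@And Phi I) Top s.

Fixpoint subst (sg : Phi -> form) (a : form) : form :=
  match a with
  | Top => Top
  | Atom p => sg p
  | Neg b => Neg (subst sg b)
  | And b c => And (subst sg b) (subst sg c)
  | Box i b => Box i (subst sg b)
  end.

(** propositional tautologies: true under every Boolean valuation that
    treats atoms and boxed formulas as propositional variables *)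
Fixpoint peval (v : Phi -> bool) (w : I -> form -> bool) (a : form) : bool :=
  match a with
  | Top => true
  | Atom p => v p
  | Neg b => ~~ peval v w b
  | And b c => peval v w b && peval v w c
  | Box i b => w i b
  end.
Definition tautology (a : form) : Prop := forall v w, peval v w a.

Definition normal_logic (L : set form) : Prop :=
  [/\ (forall a, tautology a -> L a),
      (forall i a b, L (Imp (Box i (Imp a b)) (Imp (Box i a) (Box i b)))),
      (forall a b, L (Imp a b) -> L a -> L b),
      (forall i a, L a -> L (Box i a)) &
      (forall sg a, L a -> L (subst sg a))].

Definition consistent (L : set form) (A : set form) : Prop :=
  ~ exists s : seq form, (forall a, List.In a s -> A a) /\ L (Neg (bigAnd s)).

Definition compact_logic (L : set form) : Prop :=
  forall A : set form, consistent L A <->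
    (forall B : set form, B `<=` A -> finite_set B -> consistent L B).
End Syntax.

Record kmodel (Phi I : Type) := KModel {
  st : Type;
  st_inhabited : inhabited st;
  st_countable : exists f : st -> nat, injective f;
  krel : I -> st -> st -> Prop;
  kval : Phi -> set st }.

Record pmodel (Phi I : Type) := PModel { pm : kmodel Phi I; pt : st pm }.

Fixpoint sat {Phi I : Type} (M : kmodel Phi I) (s : st M) (a : form Phi I)
  : Prop :=
  match a with
  | Top => True
  | Atom p => @kval _ _ M p s
  | Neg b => ~ sat s b
  | And b c => sat s b /\ sat s c
  | Box i b => forall t, @krel _ _ M i s t -> sat t b
  end.

Definition psat {Phi I : Type} (x : pmodel Phi I) (a : form Phi I) : Prop :=
  sat (pt x) a.

Definition sound_complete {Phi I : Type} (L : set (form Phi I))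
  (C : set (pmodel Phi I)) : Prop :=
  forall A : set (form Phi I),
    consistent L A <-> exists x, C x /\ forall a, A a -> psat x a.

Definition modal_class {Phi I : Type} (C : set (pmodel Phi I))
  (x : pmodel Phi I) : set (pmodel Phi I) :=
  [set y | C y /\ forall a, psat y a <-> psat x a].

Definition modal_space {Phi I : Type} (C : set (pmodel Phi I)) : Type :=
  { S : set (pmodel Phi I) | exists x, C x /\ S = modal_class C x }.

HB.instance Definition _ (Phi I : Type) (C : set (pmodel Phi I)) :=
  gen_eqMixin (modal_space C).
HB.instance Definition _ (Phi I : Type) (C : set (pmodel Phi I)) :=
  gen_choiceMixin (modal_space C).
HB.instance Definition _ (Phi I : Type) :=
  gen_eqMixin (form Phi I).
HB.instance Definition _ (Phi I : Type) :=
  gen_choiceMixin (form Phi I).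
HB.instance Definition _ (Phi I : Type) :=
  isPointed.Build (form Phi I) Top.

Definition stone_basic {Phi I : Type} (C : set (pmodel Phi I))
  (a : form Phi I) : set (modal_space C) :=
  [set q | exists x, C x /\ proj1_sig q = modal_class C x /\ psat x a].

Arguments stone_basic {Phi I} C a.

HB.instance Definition _ (Phi I : Type) (C : set (pmodel Phi I)) :=
  isSubBaseTopological.Build (modal_space C) [set: form Phi I]
    (stone_basic C).

(** The basic sets ||a|| are clopen, since the complement of ||a|| is
    ||~a||, and they are closed under finite intersections, since
    ||a /\ b|| = ||a|| /\ ||b||; so they form a clopen base. Two distinct
    classes disagree on some formula, hence are separated by a basic clopen
    set: the space is zero-dimensional, and therefore totally disconnected
    and Hausdorff. For compactness, let F be a proper filter and G the set
    of formulas a with ||a|| in F. A finite part of G has its conjunction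
    in F, so it holds at some point and G is consistent; by completeness G
    is realized at some x in C, and the class of x is a cluster point of F. *)

From mathcomp Require Import all_boot.
From mathcomp Require Import boolp classical_sets cardinality topology.

Set Implicit Arguments.
Unset Strict Implicit.
Unset Printing Implicit Defensive.

Local Open Scope classical_set_scope.

Lemma InP (T : eqType) (x : T) (s : seq T) : reflect (List.In x s) (x \in s).
Proof.
elim: s => [|y s IHs] /=; first by right.
rewrite in_cons; apply: (iffP orP) => [[/eqP->|/IHs]|[->|/IHs]]; by [left|right].
Qed.

Lemma filter_forall_In T U (F : set_system T) (f : U -> set T) (s : seq U) :
  Filter F -> (forall a, List.In a s -> F (f a)) ->
  F [set t | forall a, List.In a s -> f a t].
Proof.
move=> FF; elim: s => [_|b s IHs Fs]; first by apply: filterS filterT => t _ a [].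
have Fb : F (f b) by apply: Fs; left.
have {}IHs := IHs (fun a sa => Fs a (or_intror sa)).
by apply: filterS (filterI Fb IHs) => t [fbt fst] a [<-|/fst].
Qed.

Lemma zero_dimensional_hausdorff (T : topologicalType) :
  zero_dimensional T -> hausdorff_space T.
Proof.
move=> zdT; rewrite open_hausdorff => x y /zdT [U [[oU cU] Ux nUy]].
exists (U, ~` U); first by split; apply/mem_set.
by split=> //; [exact: closed_openC | rewrite setICr].
Qed.

Lemma sat_bigAnd Phi I (M : kmodel Phi I) (w : st M) s :
  sat w (bigAnd s) <-> forall a, List.In a s -> sat w a.
Proof.
elim: s => [|b s IHs] /=; first by split=> // _ a [].
rewrite IHs; split=> [[wb ws] a [<-|/ws]|ws] //.
by split=> [|a sa]; apply: ws; [left|right].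
Qed.

Section ModalSpace.
Variables (Phi I : Type) (C : set (pmodel Phi I)).
Local Notation X := (modal_space C).
Local Notation basic := (stone_basic C).

Lemma modal_space_rep (q : X) : exists2 x, C x & sval q = modal_class C x.
Proof. by have [x [Cx qx]] := proj2_sig q; exists x. Qed.

Lemma stone_basicE (q : X) x a :
  C x -> sval q = modal_class C x -> basic a q <-> psat x a.
Proof.
move=> Cx qx; split=> [[y [Cy [qy ya]]]|xa]; last by exists x.
have : modal_class C y x by rewrite -qy qx; split.
by case=> _ /(_ a) ->.
Qed.

Lemma stone_basic_Neg a : basic (Neg a) = ~` basic a.
Proof.
rewrite predeqE => q; have [x Cx qx] := modal_space_rep q.
by rewrite /setC /= !(stone_basicE _ Cx qx).
Qed.

Lemma stone_basic_bigAnd s :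
  basic (bigAnd s) = [set q | forall a, List.In a s -> basic a q].
Proof.
rewrite predeqE => q; have [x Cx qx] := modal_space_rep q.
rewrite /= (stone_basicE _ Cx qx) [psat _ _]sat_bigAnd.
by split=> xs a /xs; rewrite (stone_basicE _ Cx qx).
Qed.

Lemma open_stone_basic a : open (basic a).
Proof.
exists [set basic a]; last exact: bigcup_set1.
by move=> _ ->; exact: finI_from1.
Qed.

Lemma clopen_stone_basic a : clopen (basic a).
Proof.
split; first exact: open_stone_basic.
by rewrite -[basic a]setCK -stone_basic_Neg closedC; exact: open_stone_basic.
Qed.

Lemma nbhs_stone_basic (p : X) B :
  nbhs p B -> exists2 a, basic a p & basic a `<=` B.
Proof.
rewrite nbhsE => -[U [[D sD <-] [V DV Vp]] UB].
have [F _ FV] := sD V DV.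
exists (bigAnd (finmap.enum_fset F)); rewrite stone_basic_bigAnd.
  by move: Vp; rewrite -FV => Vp a /InP; exact: Vp.
move=> q Fq; apply: UB; exists V => //=.
by rewrite -FV => a aF; apply: Fq; exact/InP.
Qed.

Lemma modal_space_eq (p q : X) : (forall a, basic a p -> basic a q) -> p = q.
Proof.
move=> pq; have [x Cx px] := modal_space_rep p; have [y Cy qy] := modal_space_rep q.
have xy a : psat x a -> psat y a.
  by rewrite -(stone_basicE _ Cx px) -(stone_basicE _ Cy qy); exact: pq.
have xyE a : psat x a <-> psat y a.
  by split=> [|ya]; [exact: xy | apply: contrapT => /(xy (Neg a))].
have classE : modal_class C x = modal_class C y.
  by rewrite predeqE => z; split=> -[Cz zE]; split=> // a; rewrite zE xyE.
case: p {pq} px => P hP /= PE; case: q qy => Q hQ /= QE.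
by apply: eq_exist; rewrite PE QE classE.
Qed.

Lemma zero_dimensional_modal_space : zero_dimensional X.
Proof.
move=> p q /eqP pq.
have /existsNP [a /not_implyP [pa qa]] : ~ forall a, basic a p -> basic a q.
  by move/modal_space_eq.
by exists (basic a); split=> //; exact: clopen_stone_basic.
Qed.

Definition modal_point x (Cx : C x) : X :=
  exist _ (modal_class C x) (ex_intro _ x (conj Cx erefl)).

Lemma cluster_modal_point (F : set_system X) x (Cx : C x) : Filter F ->
  (forall a, F (basic a) -> psat x a) -> cluster F (modal_point Cx).
Proof.
move=> FF Fx A B FA /nbhs_stone_basic [a xa aB]; apply: contrapT => AB0.
have /Fx : F (basic (Neg a)).
  rewrite stone_basic_Neg; apply: filterS FA => q Aq qa.
  by apply: AB0; exists q; split=> //; exact: aB.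
by apply; move: xa; rewrite (stone_basicE (q := modal_point Cx) _ Cx erefl).
Qed.

Section Compactness.
Variable L : set (form Phi I).
Hypothesis LC : sound_complete L C.

Lemma consistent_stone_trace (F : set_system X) :
  ProperFilter F -> consistent L [set a | F (basic a)].
Proof.
move=> PF [s [sF Ls]].
have /filter_ex [q] : F (basic (bigAnd s)).
  by rewrite stone_basic_bigAnd; exact: filter_forall_In.
rewrite stone_basic_bigAnd => qs; have [x Cx qx] := modal_space_rep q.
have : consistent L [set a | List.In a s].
  by apply/LC; exists x; split=> // a /qs; rewrite (stone_basicE _ Cx qx).
by apply; exists s.
Qed.

Lemma compact_modal_space : compact [set: X].
Proof.
move=> F PF _; have [x [Cx Fx]] := (LC _).1 (consistent_stone_trace PF).
by exists (modal_point Cx); split=> //; exact: cluster_modal_point.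
Qed.

End Compactness.
End ModalSpace.

Theorem corollary23 (Phi I : countType) (nePhi : inhabited Phi)
  (neI : inhabited I) (L : set (form Phi I)) (C : set (pmodel Phi I)) :
  normal_logic L -> compact_logic L -> sound_complete L C ->
  [/\ totally_disconnected [set: modal_space C],
      compact [set: modal_space C] &
      hausdorff_space (modal_space C)].
Proof.
(* Completeness for arbitrary sets of formulas, with finitary consistency,
   already contains the compactness of the logic. *)
move=> _ _ LC; split.
- exact/zero_dimension_totally_disconnected/zero_dimensional_modal_space.
- exact: compact_modal_space LC.
- exact/zero_dimensional_hausdorff/zero_dimensional_modal_space.
Qed.
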